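(* Let $-\infty<m\le M<\infty$, let $A$ be a non-empty closed subset of $[m,M]$, and let $\delta>0$. Then $$\lambda\big(A^\delta\cap[m,M]\big)\ge\big(\lambda(A)+\delta\big)\wedge(M-m).$$
   Context: $\lambda$ is Lebesgue measure. For non-empty $A\subseteq\mathbb R$ and $\delta>0$, the $\delta$-expansion is $A^\delta=\{x\in\mathbb R:\exists a\in A\text{ with }|x-a|\le\delta\}$. *)

From HB Require Import structures.
From mathcomp Require Import all_boot all_order all_algebra.
From mathcomp Require Import all_classical all_reals all_analysis.
Set Implicit Arguments. Unset Strict Implicit. Unset Printing Implicit Defensive.
Import Order.TTheory GRing.Theory Num.Theory.
Local Open Scope classical_set_scope.
Local Open Scope ring_scope.

Definition expansion (R : realType) (A : set R) (delta : R) : set R :=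
  [set x | exists2 a, A a & `|x - a| <= delta].

(* If [A^delta] does not cover [[m, M]], pick [z] in [[m, M]] at distance
   more than [delta] from [A]. The point [b] of [A] nearest to [z] on one side
   exists because [A] is closed, and the interval of length [delta] between [b]
   and [z] next to [b] lies in [A^delta `&` [m, M]] but misses [A]. Adding it to
   [A] gives a set of measure [lambda A + delta] inside [A^delta `&` [m, M]]. *)

From HB Require Import structures.
From mathcomp Require Import all_boot all_order all_algebra.
From mathcomp Require Import all_classical all_reals all_analysis.
From mathcomp Require Import lra measurable_realfun.
Import Order.TTheory GRing.Theory Num.Theory numFieldNormedType.Exports.
Local Open Scope classical_set_scope.
Local Open Scope ring_scope.
Local Open Scope ereal_scope.

Lemma closed_sup_mem (R : realType) (S : set R) :
  S !=set0 -> closed S -> has_ubound S -> S (sup S).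
Proof.
move=> S0 cS uS; apply: itv_closed_supremums => //; split.
- exact: sup_upper_bound.
- by move=> y; exact: ge_sup.
Qed.

Lemma closed_inf_mem (R : realType) (S : set R) :
  S !=set0 -> closed S -> has_lbound S -> S (inf S).
Proof.
move=> S0 cS lS; apply: itv_closed_infimums => //; split.
- exact: ge_inf.
- by move=> y; exact: lb_le_inf.
Qed.

Section expansion_gap.
Set Implicit Arguments. Unset Strict Implicit.
Variables (R : realType) (A : set R) (delta : R).
Hypothesis cA : closed A.

Lemma subset_expansion : (0 <= delta)%R -> A `<=` expansion A delta.
Proof. by move=> d0 a Aa; exists a => //; rewrite subrr normr0. Qed.

Lemma expansion_gap_left (z a : R) : A a -> (a <= z)%R ->
  ~ expansion A delta z ->
  exists2 b, A b & (b + delta < z)%R /\ A `&` `]b, (b + delta)%R] = set0.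
Proof.
move=> Aa az nEz; set S := A `&` `]-oo, z].
have ubS : has_ubound S by exists z => x [_]; rewrite /= in_itv.
have Sb : S (sup S).
  apply: closed_sup_mem => //; last by apply: closedI => //; exact: lray_closed.
  by exists a; split; rewrite //= in_itv /= az.
have [Ab] := Sb; rewrite /= in_itv /= => bz.
have far : (delta < z - sup S)%R.
  rewrite ltNge; apply/negP => zbd; apply: nEz.
  by exists (sup S); rewrite // ger0_norm ?subr_ge0.
exists (sup S) => //; split; first lra.
apply/seteqP; split => // x [Ax]; rewrite /= in_itv /= => /andP[bx xbd].
have : (x <= sup S)%R.
  apply: sup_upper_bound; first by split; first exists (sup S).
  by split => //; rewrite /= in_itv /=; lra.
lra.
Qed.

Lemma expansion_gap_right (z a : R) : A a -> (z <= a)%R ->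
  ~ expansion A delta z ->
  exists2 b, A b & (z < b - delta)%R /\ A `&` `[(b - delta)%R, b[ = set0.
Proof.
move=> Aa za nEz; set S := A `&` `[z, +oo[.
have lbS : has_lbound S by exists z => x [_]; rewrite /= in_itv /= andbT.
have Sb : S (inf S).
  apply: closed_inf_mem => //; last by apply: closedI => //; exact: rray_closed.
  by exists a; split; rewrite //= in_itv /= za.
have [Ab] := Sb; rewrite /= in_itv /= andbT => zb.
have far : (delta < inf S - z)%R.
  rewrite ltNge; apply/negP => zbd; apply: nEz.
  by exists (inf S); rewrite // distrC ger0_norm ?subr_ge0.
exists (inf S) => //; split; first lra.
apply/seteqP; split => // x [Ax]; rewrite /= in_itv /= => /andP[bdx xb].
have : (inf S <= x)%R.
  apply: ge_inf => //.
  by split => //; rewrite /= in_itv /= andbT; lra.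
lra.
Qed.

Lemma expansion_gap (m M z : R) : (0 < delta)%R -> A !=set0 ->
  A `<=` `[m, M]%classic -> `[m, M]%classic z -> ~ expansion A delta z ->
  exists I : set R, [/\ measurable I, lebesgue_measure I = delta%:E,
    I `<=` expansion A delta `&` `[m, M]%classic & A `&` I = set0].
Proof.
move=> d0 [a Aa] AmM zmM nEz; move: zmM; rewrite /= in_itv /= => /andP[mz zM].
have [az|za] := leP a z.
- have [b Ab [bdz AI]] := expansion_gap_left Aa az nEz.
  have := AmM _ Ab; rewrite /= in_itv /= => /andP[mb bM].
  exists `]b, (b + delta)%R]%classic; split => //.
  + by rewrite lebesgue_measure_itv /= lte_fin ltrDl d0 -EFinD addrAC subrr add0r.
  + move=> x; rewrite /= in_itv /= => /andP[bx xbd]; split.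
      by exists b => //; rewrite ler_distl; apply/andP; split; lra.
    by rewrite /= in_itv /=; apply/andP; split; lra.
- have [b Ab [zbd AI]] := expansion_gap_right Aa (ltW za) nEz.
  have := AmM _ Ab; rewrite /= in_itv /= => /andP[mb bM].
  exists `[(b - delta)%R, b[%classic; split => //.
  + rewrite lebesgue_measure_itv /= lte_fin ltrBlDr ltrDl d0 -EFinD.
    by congr (_%:E); lra.
  + move=> x; rewrite /= in_itv /= => /andP[bdx xb]; split.
      by exists b => //; rewrite ler_distl; apply/andP; split; lra.
    by rewrite /= in_itv /=; apply/andP; split; lra.
Qed.

End expansion_gap.

Theorem mainTheorem18 (R : realType) (m M : R) (A : set R) (delta : R) :
  (m <= M)%R ->
  A !=set0 -> closed A -> A `<=` `[m, M]%classic ->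
  (0 < delta)%R ->
  Order.min ((@lebesgue_measure R) A + delta%:E) (M - m)%:E
    <= (@lebesgue_measure R) (expansion A delta `&` `[m, M]%classic).
Proof.
move=> mM A0 cA AmM d0.
have [cover|] := pselect (`[m, M] `<=` expansion A delta `&` `[m, M]).
  rewrite ge_min; apply/orP; right.
  apply: (@le_trans _ _ (lebesgue_measure `[m, M]%classic)); last exact: le_outer_measure.
  rewrite lebesgue_measure_itv /= lte_fin -EFinB.
  by case: ltP => // Mm; rewrite [M](@le_anti _ _ M m) ?Mm // subrr.
move=> /existsNP [z /not_implyP [zmM nBz]].
have nEz : ~ expansion A delta z by move=> Ez; apply: nBz.
have [I [mI lI IB AI]] := expansion_gap cA d0 A0 AmM zmM nEz.
rewrite ge_min -lI -measureU //; last exact: closed_measurable.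
apply/orP; left; apply: le_outer_measure => x [Ax|/IB//].
by split; [exact: subset_expansion (ltW d0) _ Ax | exact: AmM].
Qed.
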